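(* Let $p$ be a prime and $0\le\ell<p$. Then \[S_\ell^{*0}-S_\ell^*=(-1)^\ell.\]
   Context: For $u\in\mathbb{F}_p$ and $0\le\ell<p$, $S_\ell^*(u)=\{S\subseteq\mathbb{F}_p^* \mid \#S=\ell,\ \sum_{s\in S}s=u\}$, where $\mathbb{F}_p^*=\mathbb{F}_p\setminus\{0\}$ and sums are in $\mathbb{F}_p$. The cardinality $\#S_\ell^*(u)$ does not depend on $u\in\mathbb{F}_p^*$; this common value is denoted $S_\ell^*$. Also $S_\ell^{*0}:=\#S_\ell^*(0)$ (so e.g. $S_0^{*0}=1$, $S_0^*=0$). *)

From mathcomp Require Import all_boot all_algebra.
Set Implicit Arguments. Unset Strict Implicit. Unset Printing Implicit Defensive.
Import GRing.Theory.
Local Open Scope ring_scope.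

Definition Sstar_set (p : nat) (l : nat) (u : 'F_p) : {set {set 'F_p}} :=
  [set S : {set 'F_p} | [&& (0 : 'F_p) \notin S, #|S| == l :> nat & \sum_(s in S) s == u]].

Definition Sstar_card (p : nat) (l : nat) (u : 'F_p) : nat := #|Sstar_set l u|.

From mathcomp Require Import all_boot all_algebra.
Import GRing.Theory.
From mathcomp Require Import zify.

(* Let T_l(u) be the set of all l-subsets of F_p (zero allowed) with sum u.
   Sorting them by whether they contain 0 gives #T_{l+1}(u) = S*_{l+1}(u) + S*_l(u).
   For 0 < l < p, translating every element by t adds l t to the sum, and l is
   invertible mod p, so #T_l(u) does not depend on u.  Comparing u = 0 with
   u != 0 gives S*0_{l+1} - S*_{l+1} = -(S*0_l - S*_l); also S*0_0 - S*_0 = 1. *)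

Set Implicit Arguments.
Unset Strict Implicit.
Unset Printing Implicit Defensive.
Local Open Scope ring_scope.

Definition sum_sets (V : finZmodType) (k : nat) (u : V) : {set {set V}} :=
  [set S : {set V} | (#|S| == k) && (\sum_(s in S) s == u)].

Section Translation.

Variable V : finZmodType.

Definition translate (t : V) (S : {set V}) : {set V} := [set x + t | x in S].

Lemma card_translate t S : #|translate t S| = #|S|.
Proof. exact/card_imset/addIr. Qed.

Lemma sum_translate t S : \sum_(s in translate t S) s = \sum_(s in S) s + t *+ #|S|.
Proof. by rewrite big_imset /=; [rewrite big_split sumr_const | move=> x y _ _ /addIr]. Qed.

Lemma translate_inj t : injective (translate t).
Proof.
have translateK s : cancel (translate s) (translate (- s)).
  by move=> S; rewrite /translate -imset_comp (eq_imset _ (addrK s)) imset_id.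
exact: can_inj (translateK t).
Qed.

Lemma card_sum_sets_leD k (u t : V) :
  (#|sum_sets k u| <= #|sum_sets k (u + t *+ k)%R|)%N.
Proof.
rewrite -(card_imset _ (@translate_inj t)); apply/subset_leq_card/subsetP.
move=> B /imsetP[S]; rewrite !inE => /andP[/eqP cardS /eqP sumS] ->.
by rewrite card_translate sum_translate cardS sumS !eqxx.
Qed.

Lemma card_sum_setsD k (u t : V) : #|sum_sets k (u + t *+ k)| = #|sum_sets k u|.
Proof.
apply/eqP; rewrite eqn_leq card_sum_sets_leD andbT.
by rewrite (leq_trans (card_sum_sets_leD _ _ (- t))) // mulNrn addrK.
Qed.

End Translation.

Lemma card_sum_sets_const (F : finFieldType) k (u v : F) :
  k%:R != 0 :> F -> #|sum_sets k u| = #|sum_sets k v|.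
Proof.
move=> k_neq0; have shift_uv : u + ((v - u) / k%:R) *+ k = v.
  by rewrite -mulr_natr divfK // addrC subrK.
by rewrite -(card_sum_setsD k u ((v - u) / k%:R)) shift_uv.
Qed.

Lemma Fp_natr_neq0 p k : prime p -> (0 < k < p)%N -> k%:R != 0 :> 'F_p.
Proof.
move=> p_pr /andP[k_gt0 k_lt_p]; rewrite -(dvdn_pcharf (pchar_Fp p_pr)).
by apply/negP => /(dvdn_leq k_gt0); rewrite leqNgt k_lt_p.
Qed.

Section ZeroFreeSubsets.

Variable p : nat.

Lemma card_sum_setsS k (u : 'F_p) :
  #|sum_sets k.+1 u| = (Sstar_card k.+1 u + Sstar_card k u)%N.
Proof.
rewrite -(cardsID [set S : {set 'F_p} | 0 \in S]) addnC; congr (_ + _)%N.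
  by apply: eq_card => S; rewrite !inE andbC.
have add0_inj : {in Sstar_set k u &, injective (fun S : {set 'F_p} => 0 |: S)}.
  by move=> A B; rewrite !inE => /and3P[A0 _ _] /and3P[B0 _ _] eqAB;
     rewrite -(setU1K A0) eqAB setU1K.
rewrite /Sstar_card -(card_in_imset add0_inj); apply: eq_card => S.
rewrite !inE; apply/andP/imsetP => [[/andP[/eqP cardS /eqP sumS] S0]|].
  exists (S :\ 0); last by rewrite setD1K.
  rewrite !inE eqxx -sumS (big_setD1 0 S0) /= add0r eqxx andbT.
  by move: (cardsD1 0 S); rewrite S0 cardS add1n => -[->].
case=> A; rewrite inE => /and3P[A0 /eqP cardA /eqP sumA] ->.
by rewrite setU11 cardsU1 A0 cardA big_setU1 //= add0r sumA !eqxx.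
Qed.

Lemma Sstar_card0 (u : 'F_p) : Sstar_card 0 u = (u == 0).
Proof.
have Sstar_set0 : Sstar_set 0 u = [set S | (S == set0) && (u == 0)].
  apply/setP => S; rewrite !inE cards_eq0.
  have [-> | _] := eqVneq S set0; last by rewrite andbF.
  by rewrite inE big_set0 eq_sym.
rewrite /Sstar_card Sstar_set0; case: eqP => _ /=.
  by rewrite -(cards1 (@set0 'F_p)); apply: eq_card => S; rewrite !inE andbT.
by apply/eqP; rewrite cards_eq0; apply/eqP/setP => S; rewrite !inE andbF.
Qed.

Lemma Sstar_cardS_add (u v : 'F_p) k : prime p -> (k.+1 < p)%N ->
  (Sstar_card k.+1 u + Sstar_card k u = Sstar_card k.+1 v + Sstar_card k v)%N.
Proof.
move=> p_pr k_lt; rewrite -!card_sum_setsS; apply: card_sum_sets_const.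
by rewrite Fp_natr_neq0.
Qed.

End ZeroFreeSubsets.

Theorem proposition5 (p l : nat) (hp : prime p) (hl : (l < p)%N)
  (u : 'F_p) (hu : u != 0%R) :
  ((@Sstar_card p l 0%R)%:Z - (Sstar_card l u)%:Z = (-1) ^+ l)%R.
Proof.
elim: l hl => [|l IHl] hl; first by rewrite !Sstar_card0 eqxx (negbTE hu).
have := Sstar_cardS_add 0 u hp hl; rewrite exprS -(IHl (ltnW hl)); lia.
Qed.
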